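(* Let $\ell$ be a prime, $V$ a finite-dimensional $\mathbf{Q}_\ell$-vector space, $k$ an integer with $0<k<\dim(V)$, and $g \in \mathrm{GL}(V)$. Then $\wedge^k(g)$ is unipotent if and only if there exists a $k$-th root of unity $\gamma \in \mathbf{Z}_\ell$ such that $\gamma g$ is unipotent.
   Context: $\wedge^k(g)$ denotes the induced automorphism of the $k$-th exterior power $\wedge^k(V)$. *)

From HB Require Import structures.
From mathcomp Require Import all_boot all_order all_algebra.
From mathcomp Require Import boolp.

Set Implicit Arguments.
Unset Strict Implicit.
Unset Printing Implicit Defensive.

Import Order.TTheory GRing.Theory Num.Theory.
Local Open Scope ring_scope.

(* The l-adic integers Z_l, built as the inverse limit of the Z / l^n Z:     *)
(* an element is a sequence (x_n)_n of integers with x_n = x_{n+1} mod l^n   *)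
(* (so that x_n is the canonical residue in [0, l^n)).  To get an integral   *)
(* domain for every l, the base is  lbase l := pdiv (maxn l 2),  which is    *)
(* equal to l whenever l is prime (this is the same trick as 'F_p).          *)

Definition lbase (l : nat) : nat := pdiv (maxn l 2).

Lemma lbase_prime l : prime (lbase l).
Proof. by apply: pdiv_prime; rewrite leq_max ltnSn orbT. Qed.

Lemma lbase_id l : prime l -> lbase l = l.
Proof.
move=> pl; rewrite /lbase (maxn_idPl (prime_gt1 pl)); exact: pdiv_id.
Qed.

Definition Qm (l n : nat) : int := ((lbase l) ^ n)%N%:Z.

Record zl (l : nat) := Zl {
  zseq : nat -> int ;
  zseqP : forall n, zseq n = (zseq n.+1 %% Qm l n)%Z }.

HB.instance Definition _ l := gen_eqMixin (zl l).
HB.instance Definition _ l := gen_choiceMixin (zl l).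

Section ZlTheory.
Variable l : nat.
Local Notation Q := (Qm l).
Local Notation q := (lbase l).

Lemma zl_eq (x y : zl l) : zseq x =1 zseq y -> x = y.
Proof.
case: x y => [x Hx] [y Hy] /= /funext E; subst y.
by rewrite (Prop_irrelevance Hx Hy).
Qed.

Lemma mod_dvdm (m D d : int) : (d %| D)%Z -> ((m %% D)%Z = m %[mod d])%Z.
Proof.
move/dvdzP => [e ->].
by rewrite [in RHS](divz_eq m (e * d)) mulrA modzMDl.
Qed.

Lemma Qm_dvd m n : (m <= n)%N -> (Q m %| Q n)%Z.
Proof. by move=> mn; rewrite dvdzE /=; apply: dvdn_exp2l. Qed.

Definition compat (f : nat -> int) := forall n, (f n = f n.+1 %[mod Q n])%Z.

Definition mkz (f : nat -> int) (H : compat f) : zl l.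
Proof.
refine (@Zl l (fun n => f n %% Q n)%Z _) => n.
by rewrite H mod_dvdm // Qm_dvd.
Defined.

Lemma zseq_mod (x : zl l) n : zseq x n = (zseq x n %% Q n)%Z.
Proof. by rewrite [in RHS]zseqP modz_mod -zseqP. Qed.

Lemma cadd (x y : zl l) : compat (fun n => zseq x n + zseq y n).
Proof. by move=> n; rewrite (zseqP x n) (zseqP y n) modzDm. Qed.
Lemma copp (x : zl l) : compat (fun n => - zseq x n).
Proof. by move=> n; rewrite (zseqP x n) modzNm. Qed.
Lemma cmul (x y : zl l) : compat (fun n => zseq x n * zseq y n).
Proof. by move=> n; rewrite (zseqP x n) (zseqP y n) modzMm. Qed.
Lemma ccst (c : int) : compat (fun => c).
Proof. by []. Qed.

Definition zadd x y := mkz (cadd x y).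
Definition zopp x := mkz (copp x).
Definition zmul x y := mkz (cmul x y).
Definition zzero := mkz (ccst 0).
Definition zone := mkz (ccst 1).

Lemma zaddA : associative zadd.
Proof. by move=> x y z; apply: zl_eq => n /=; rewrite modzDml modzDmr addrA. Qed.
Lemma zaddC : commutative zadd.
Proof. by move=> x y; apply: zl_eq => n /=; rewrite addrC. Qed.
Lemma zadd0 : left_id zzero zadd.
Proof. by move=> x; apply: zl_eq => n /=; rewrite modzDml add0r -zseq_mod. Qed.
Lemma zaddN : left_inverse zzero zopp zadd.
Proof. by move=> x; apply: zl_eq => n /=; rewrite modzDml addNr. Qed.

HB.instance Definition _ := GRing.isZmodule.Build (zl l) zaddA zaddC zadd0 zaddN.

Lemma zmulA : associative zmul.
Proof. by move=> x y z; apply: zl_eq => n /=; rewrite modzMml modzMmr mulrA. Qed.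
Lemma zmulC : commutative zmul.
Proof. by move=> x y; apply: zl_eq => n /=; rewrite mulrC. Qed.
Lemma zmul1 : left_id zone zmul.
Proof. by move=> x; apply: zl_eq => n /=; rewrite modzMml mul1r -zseq_mod. Qed.
Lemma zmulDl : left_distributive zmul (@GRing.add (zl l)).
Proof.
by move=> x y z; apply: zl_eq => n /=; rewrite modzMml modzDm mulrDl.
Qed.

Lemma q_gt1 : (1 < q)%N.
Proof. exact: prime_gt1 (lbase_prime l). Qed.

Lemma zone_neq0 : zone != (0 : zl l).
Proof.
apply/eqP => /(congr1 (fun x => zseq x 1)) /=.
rewrite mod0z modz_small //.
by rewrite /Qm expn1 ltz_nat q_gt1.
Qed.

HB.instance Definition _ :=
  GRing.Zmodule_isComNzRing.Build (zl l) zmulA zmulC zmul1 zmulDl zone_neq0.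

Definition zunit : {pred zl l} := fun x => `[< exists y, y * x = 1 >].
Definition zinv (x : zl l) : zl l :=
  match pselect (exists y, y * x = 1) with
  | left H => projT1 (cid H)
  | right _ => x
  end.

Lemma zmulV : {in zunit, left_inverse 1 zinv *%R}.
Proof.
move=> x /asboolP H; rewrite /zinv; case: pselect => // H'.
exact: (projT2 (cid H')).
Qed.

Lemma zunitPl x y : y * x = 1 -> zunit x.
Proof. by move=> H; apply/asboolP; exists y. Qed.

Lemma zinv_out : {in [predC zunit], zinv =1 id}.
Proof.
move=> x; rewrite inE /= => /asboolPn H; rewrite /zinv.
by case: pselect.
Qed.

HB.instance Definition _ :=
  GRing.ComNzRing_hasMulInverse.Build (zl l) zmulV zunitPl zinv_out.

Lemma zl_stab (x : zl l) m n : (m <= n)%N -> zseq x m = (zseq x n %% Q m)%Z.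
Proof.
move=> /subnK <-; elim: (n - m)%N => [|d IH]; first by rewrite add0n -zseq_mod.
by rewrite IH addSn (zseqP x (d + m)) mod_dvdm // Qm_dvd // leq_addl.
Qed.

Lemma dvd_stab (x : zl l) m n e : (m <= n)%N -> (e <= m)%N ->
  (Q e %| zseq x n)%Z = (Q e %| zseq x m)%Z.
Proof.
move=> mn em; rewrite (zl_stab x mn).
rewrite [in LHS](divz_eq (zseq x n) (Q m)) rpredDl //.
by apply: dvdz_mull; apply: Qm_dvd.
Qed.

Lemma zseq0 n : zseq (0 : zl l) n = 0.
Proof. by rewrite /= mod0z. Qed.

Lemma zl_val (x : zl l) : x != 0 -> exists m i, (i < m)%N /\
  forall n, (m <= n)%N -> (Q i %| zseq x n)%Z /\ ~~ (Q i.+1 %| zseq x n)%Z.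
Proof.
move=> nx.
have [m xm] : exists m, zseq x m != 0.
  case: (pselect (exists m, zseq x m != 0)) => // H.
  move/negP: nx; case; apply/eqP; apply: zl_eq => k; rewrite zseq0.
  by apply/eqP/negPn/negP => hk; apply: H; exists k.
have pq := lbase_prime l.
set b := `|zseq x m|%N.
have b0 : (0 < b)%N by rewrite absz_gt0.
have blt : (b < q ^ m)%N.
  have ge0 : 0 <= zseq x m by rewrite zseq_mod modz_ge0 // gt_eqF // /Qm ltz_nat expn_gt0 prime_gt0.
  have lt : zseq x m < Q m by rewrite zseq_mod ltz_pmod // /Qm ltz_nat expn_gt0 prime_gt0.
  move: ge0 lt; rewrite /b /Qm; case: (zseq x m) => // p _ /= h.
exists m, (logn q b); split.
  rewrite -(ltn_exp2l _ _ q_gt1); apply: leq_ltn_trans blt.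
  exact: dvdn_leq b0 (pfactor_dvdnn q b).
move=> n mn.
have im : (logn q b < m)%N.
  rewrite -(ltn_exp2l _ _ q_gt1); apply: leq_ltn_trans blt.
  exact: dvdn_leq b0 (pfactor_dvdnn q b).
rewrite !(dvd_stab x mn) //; last exact: ltnW.
by rewrite !dvdzE /= pfactor_dvdnn pfactor_dvdn // ltnn.
Qed.

Lemma logn_eq p a i : prime p -> (p ^ i %| a)%N -> ~~ (p ^ i.+1 %| a)%N ->
  logn p a = i.
Proof.
move=> pp h1 h2.
have a0 : (0 < a)%N by case: a h2 {h1} => //; rewrite dvdn0.
by apply/eqP; rewrite eqn_leq leqNgt -!(pfactor_dvdn _ _ a0) // h1 h2.
Qed.

Lemma zl_dom : GRing.integral_domain_axiom (zl l).
Proof.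
move=> x y xy0.
have [x0|nx] := eqVneq x 0; first by apply/orP; left; apply/eqP.
have [y0|ny] := eqVneq y 0; first by apply/orP; right; apply/eqP.
exfalso.
have pq := lbase_prime l.
have [m [i [im Hx]]] := zl_val nx.
have [m' [j [jm Hy]]] := zl_val ny.
set n := (m + m')%N.
have [xi xi1] := Hx n (leq_addr _ _).
have [yj yj1] := Hy n (leq_addl _ _).
have : (Q n %| zseq x n * zseq y n)%Z.
  apply/dvdz_mod0P; move: (congr1 (fun z => zseq z n) xy0) => /=.
  by rewrite mod0z.
move: xi xi1 yj yj1; rewrite !dvdzE /= abszM.
set a := `|zseq x n|%N; set c := `|zseq y n|%N => xi xi1 yj yj1 d.
have la := logn_eq pq xi xi1.
have lc := logn_eq pq yj yj1.
have a0 : (0 < a)%N by case: a xi1 {xi d la} => //; rewrite dvdn0.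
have c0 : (0 < c)%N by case: c yj1 {yj d lc} => //; rewrite dvdn0.
move: d; rewrite pfactor_dvdn ?muln_gt0 ?a0 ?c0 // lognM // la lc => d.
have : (i + j < n)%N by rewrite /n -addSn leq_add // ltnW.
by rewrite ltnNge d.
Qed.

End ZlTheory.

HB.instance Definition _ l := GRing.ComUnitRing_isIntegral.Build (zl l) (@zl_dom l).

Definition Ql (l : nat) := {fraction (zl l)}.

Definition zl_to_ql (l : nat) (x : zl l) : Ql l := @FracField.tofrac (zl l) x.

(* Exterior powers of a matrix.  For g in 'M_n (a linear map of V = R^n in   *)
(* the standard basis e_1..e_n), the matrix of  wedge^k(g)  in the basis     *)
(* e_I = e_{i_1} /\ ... /\ e_{i_k}  (I = {i_1 < ... < i_k} a k-subset) is    *)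
(* the k-th compound matrix, whose (I, J) entry is the k x k minor of g with *)
(* rows I and columns J (both taken in increasing order).                    *)

Definition ksub (n k : nat) := {S : {set 'I_n} | #|S| == k}.

(* the increasing enumeration 'I_k -> 'I_n of a k-subset *)
Definition kenum n k (S : ksub n k) (a : 'I_k) : 'I_n :=
  @enum_val _ (mem (val S)) (cast_ord (esym (eqP (valP S))) a).

Definition wedge (R : comNzRingType) (n k : nat) (g : 'M[R]_n) :
    'M[R]_#|{: ksub n k}| :=
  \matrix_(I, J) \det (\matrix_(a < k, b < k)
      g (kenum (enum_val I) a) (kenum (enum_val J) b)).

Definition unipotent (R : pzRingType) (m : nat) (A : 'M[R]_m) : Prop :=
  exists N : nat, (A - 1%:M) ^+ N = 0.

(* Over a splitting field of its characteristic polynomial, g is conjugate to a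
   lower triangular matrix with diagonal d_1, ..., d_n.  By Cauchy-Binet,
   wedge^k is multiplicative, so wedge^k g is conjugate to wedge^k of that
   matrix, which is triangular for the order of k-subsets by total weight, with
   diagonal entries the products of the d_i over k-subsets.  Hence wedge^k g is
   unipotent iff all these products are 1, and c g is unipotent iff c d_i = 1
   for all i.  As 0 < k < n, two k-subsets differing in one element show that
   all d_i equal some lambda with lambda^k = 1.  Then lambda = tr g / n lies in
   Q_l, and a root of unity of Q_l lies in Z_l because every nonzero element of
   Z_l is l^i times a unit. *)

From mathcomp Require Import all_boot all_algebra perm qfpoly.
From mathcomp Require Import boolp ring zify.
Set Implicit Arguments.
Unset Strict Implicit.
Unset Printing Implicit Defensive.
Import GRing.Theory Num.Theory.
Local Open Scope ring_scope.

Section KSubsets.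
Variables n k : nat.
Implicit Types S : ksub n k.

Definition ksub_of (A : {set 'I_n}) (cardA : #|A| == k) : ksub n k :=
  exist (fun B : {set 'I_n} => #|B| == k) A cardA.

Lemma kenum_inj S : injective (kenum S).
Proof. by move=> a b /enum_val_inj /cast_ord_inj. Qed.

Lemma kenum_mem S a : kenum S a \in val S.
Proof. exact: enum_valP. Qed.

Lemma kenum_surj S x : x \in val S -> exists a, kenum S a = x.
Proof.
move=> Sx; exists (cast_ord (eqP (valP S)) (enum_rank_in Sx x)).
by rewrite /kenum cast_ordK enum_rankK_in.
Qed.

Lemma kenum_im S : val S = [set kenum S a | a in 'I_k].
Proof.
apply/setP => x; apply/idP/imsetP => [Sx|[a _ ->]]; last exact: kenum_mem.
by have [a <-] := kenum_surj Sx; exists a.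
Qed.

Lemma ksub_ext S S' : kenum S =1 kenum S' -> S = S'.
Proof.
move=> eSS'; apply: val_inj; rewrite !kenum_im; apply/setP => x.
by apply/imsetP/imsetP => -[a _ ->]; exists a; rewrite ?eSS'.
Qed.

Lemma kenum_sorted S : sorted ltn (map val (enum (mem (val S)))).
Proof.
rewrite -[enum _](eq_filter (mem_enum _)).
rewrite -(eq_filter (mem_map val_inj _)) -filter_map.
by rewrite (sorted_filter ltn_trans) // unlock val_ord_enum iota_ltn_sorted.
Qed.

Lemma kenum_homo S : {homo kenum S : a b / (a < b)%N}.
Proof.
move=> a b ab; rewrite /kenum !(enum_val_nth (kenum S a)).
set s := enum _.
have size_s : size s = k by rewrite /s -cardE; exact: (eqP (valP S)).
rewrite -!(nth_map _ 0%N val) ?size_s //.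
apply: (sorted_ltn_nth ltn_trans) => //; first exact: kenum_sorted.
all: by rewrite ?inE ?size_map ?size_s /= ?ltn_ord.
Qed.

Lemma kenum_homo_leq S : {homo kenum S : a b / (a <= b)%N}.
Proof.
move=> a b; rewrite leq_eqVlt => /predU1P [/val_inj -> //|ab].
exact/ltnW/kenum_homo.
Qed.

Lemma big_kenum (R : Type) (idx : R) (op : Monoid.com_law idx) S (F : 'I_n -> R) :
  \big[op/idx]_(x in val S) F x = \big[op/idx]_(a < k) F (kenum S a).
Proof.
rewrite [in LHS]kenum_im big_imset /=; last by move=> a b _ _; exact: kenum_inj.
by apply: eq_bigl => a; rewrite inE.
Qed.

End KSubsets.

Section CauchyBinet.
Variable R : comPzRingType.
Variables k n : nat.
Local Notation ffun_kn := {ffun 'I_k -> 'I_n}.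

Definition arrange (p : ksub n k * 'S_k) : ffun_kn := [ffun i => kenum p.1 (p.2 i)].

Lemma arrange_inj : injective arrange.
Proof.
move=> [S s] [S' s'] /ffunP /= eSS'.
have {}eSS' i : kenum S (s i) = kenum S' (s' i) by have := eSS' i; rewrite !ffunE.
have eS : S = S'.
  apply: val_inj; apply/setP => x; apply/idP/idP => Sx.
    have [a <-] := kenum_surj Sx; rewrite -(permKV s a) eSS'; exact: kenum_mem.
  have [a <-] := kenum_surj Sx; rewrite -(permKV s' a) -eSS'; exact: kenum_mem.
subst S'; congr (_, _); apply/permP => i; exact/kenum_inj/eSS'.
Qed.

Lemma arrange_im : [set f : ffun_kn | injectiveb f] = arrange @: setT.
Proof.
apply/setP => f; rewrite inE; apply/idP/imsetP => [/injectiveP f_inj|[p _ ->]]; last first.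
  by apply/injectiveP => i j; rewrite !ffunE => /kenum_inj /perm_inj.
have card_im : #|[set f i | i in 'I_k]| == k by rewrite card_imset // card_ord.
pose S := ksub_of card_im.
have Sf i : f i \in val S by rewrite /= imset_f.
pose s i := odflt i [pick a | kenum S a == f i].
have kenum_s i : kenum S (s i) = f i.
  rewrite /s; case: pickP => [a /eqP //|none].
  by have [a fa] := kenum_surj (Sf i); move: (none a); rewrite fa eqxx.
have s_inj : injective s by move=> i j eij; apply: f_inj; rewrite -!kenum_s eij.
by exists (S, perm s_inj) => //; apply/ffunP => i; rewrite ffunE /= permE kenum_s.
Qed.

Lemma det_mulmx_sum_ffun (C : 'M[R]_(k, n)) (D : 'M[R]_(n, k)) :
  \det (C *m D) =
  \sum_(f : ffun_kn | injectiveb f) (\prod_i C i (f i)) * \det (\matrix_(i, j) D (f i) j).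
Proof.
transitivity (\sum_(f : ffun_kn) (\prod_i C i (f i)) * \det (\matrix_(i, j) D (f i) j)).
  transitivity (\sum_(s : 'S_k) \sum_(f : ffun_kn)
      (-1) ^+ s * \prod_i (C i (f i) * D (f i) (s i))).
    apply: eq_bigr => s _; rewrite -big_distrr /=; congr (_ * _).
    rewrite -(bigA_distr_bigA (fun i j => C i j * D j (s i))) /=.
    by apply: eq_bigr => i _; rewrite mxE.
  rewrite exchange_big; apply: eq_bigr => f _ /=.
  rewrite big_distrr; apply: eq_bigr => s _ /=.
  rewrite big_split /= mulrCA; congr (_ * (_ * _)).
  by apply: eq_bigr => i _; rewrite mxE.
rewrite (bigID (fun f : ffun_kn => injectiveb f)) /= [X in _ + X]big1 ?addr0 //.
move=> f /injectivePn [i1 [i2 i12 f12]].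
by rewrite (determinant_alternate i12) ?mulr0 // => j; rewrite !mxE f12.
Qed.

Lemma cauchy_binet (C : 'M[R]_(k, n)) (D : 'M[R]_(n, k)) :
  \det (C *m D) = \sum_(S : ksub n k)
     \det (colsub (kenum S) C) * \det (rowsub (kenum S) D).
Proof.
rewrite det_mulmx_sum_ffun (eq_bigl (mem [set f : ffun_kn | injectiveb f])); last first.
  by move=> f; rewrite !inE.
rewrite arrange_im big_imset /=; last by move=> p q _ _; exact: arrange_inj.
rewrite (eq_bigl xpredT) => [|p]; last by rewrite inE.
rewrite -(pair_bigA _ (fun S s => (\prod_i C i (arrange (S, s) i)) *
           \det (\matrix_(i, j) D (arrange (S, s) i) j))) /=.
apply: eq_bigr => S _; rewrite big_distrl /=; apply: eq_bigr => s _.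
have -> : \matrix_(i, j) D (arrange (S, s) i) j = row_perm s (rowsub (kenum S) D).
  by apply/matrixP => i j; rewrite !mxE ffunE.
rewrite row_permE det_mulmx det_perm -mulrA mulrCA; congr (_ * (_ * _)).
by apply: eq_bigr => i _; rewrite ffunE mxE.
Qed.

End CauchyBinet.

Section Wedge.
Variable R : comNzRingType.
Variables n k : nat.
Local Notation wedge := (@wedge R n k).

Lemma wedgeM (A B : 'M[R]_n) : wedge (A *m B) = wedge A *m wedge B.
Proof.
apply/matrixP => I J; rewrite !mxE.
set C := \matrix_(a < k, j < n) A (kenum (enum_val I) a) j.
set D := \matrix_(j < n, b < k) B j (kenum (enum_val J) b).
have -> : \matrix_(a < k, b < k) (A *m B) (kenum (enum_val I) a) (kenum (enum_val J) b)
   = C *m D.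
  by apply/matrixP => a b; rewrite !mxE; apply: eq_bigr => j _; rewrite !mxE.
rewrite cauchy_binet (reindex (enum_val : 'I_#|{: ksub n k}| -> _)) /=; last first.
  by exists enum_rank => x _; [exact: enum_valK | exact: enum_rankK].
apply: eq_bigr => K _; rewrite !mxE.
by congr (_ * _); congr (\det _); apply/matrixP => a b; rewrite !mxE.
Qed.

Lemma wedge1 : wedge 1%:M = 1%:M.
Proof.
apply/matrixP => I J; rewrite !mxE.
have [<-|IJ] := eqVneq I J.
  rewrite -[RHS](det1 _ k); congr (\det _); apply/matrixP => a b.
  by rewrite !mxE (inj_eq (@kenum_inj _ _ _)).
set S := enum_val I; set S' := enum_val J.
have [x Sx S'x] : exists2 x, x \in val S & x \notin val S'.
  apply/exists_inP; apply: contra_neqT IJ => /exists_inPn S_S'.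
  apply/enum_val_inj/val_inj/eqP; rewrite eqEcard.
  rewrite (eqP (valP S)) (eqP (valP S')) leqnn andbT.
  by apply/subsetP => y /S_S' /negPn.
have [a xa] := kenum_surj Sx.
rewrite (expand_det_row _ a) big1 // => b _; rewrite !mxE xa.
by case: eqP => [ex|]; [case/negP: S'x; rewrite ex kenum_mem | rewrite mul0r].
Qed.

End Wedge.

Lemma map_wedge (R R' : comNzRingType) (f : {rmorphism R -> R'}) n k (A : 'M[R]_n) :
  map_mx f (wedge k A) = wedge k (map_mx f A).
Proof.
apply/matrixP => I J; rewrite !mxE -det_map_mx; congr (\det _).
by apply/matrixP => a b; rewrite !mxE.
Qed.

Lemma wedge_invmx (R : comUnitRingType) n k (P : 'M[R]_n) : P \in unitmx ->
  wedge k P \in unitmx /\ wedge k (invmx P) = invmx (wedge k P).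
Proof.
move=> Pu; have PPi : wedge k P *m wedge k (invmx P) = 1%:M.
  by rewrite -wedgeM mulmxV // wedge1.
have [WPu _] := mulmx1_unit PPi; split => //.
by rewrite -[LHS]mul1mx -(mulVmx WPu) -mulmxA PPi mulmx1.
Qed.

Section WeightTriangular.
Variable R : comNzRingType.
Variable m : nat.
Variable w : 'I_m -> nat.
Implicit Types A B M : 'M[R]_m.

(* Triangularity after reordering the indices by weight: [wedge k] of a
   triangular matrix is of this form for the total weight of a k-subset, though
   it is not triangular in the enumeration order of [ksub n k]. *)
Definition wtrig_mx M := forall i j, i != j -> M i j != 0 -> (w j < w i)%N.

Lemma wtrig_mulmx A B : wtrig_mx A -> wtrig_mx B -> wtrig_mx (A *m B).
Proof.
move=> wA wB i j ij; apply: contraTT => ji; rewrite negbK mxE big1 // => x _.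
have [Aix|Aix] := eqVneq (A i x) 0; first by rewrite Aix mul0r.
have [Bxj|Bxj] := eqVneq (B x j) 0; first by rewrite Bxj mulr0.
suff : (w j < w i)%N by rewrite (negPf ji).
have [ix|ix] := eqVneq i x; first by move: ij Bxj; rewrite ix; exact: wB.
have [xj|xj] := eqVneq x j; first by move: ix Aix; rewrite xj; exact: wA.
exact: ltn_trans (wB _ _ xj Bxj) (wA _ _ ix Aix).
Qed.

Lemma wtrig_mulmx_diag A B i : wtrig_mx A -> wtrig_mx B -> (A *m B) i i = A i i * B i i.
Proof.
move=> wA wB; rewrite mxE (bigD1 i) //= big1 ?addr0 // => x xi.
have [Aix|Aix] := eqVneq (A i x) 0; first by rewrite Aix mul0r.
have [Bxi|Bxi] := eqVneq (B x i) 0; first by rewrite Bxi mulr0.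
have ix : i != x by rewrite eq_sym.
by have := ltn_trans (wB _ _ xi Bxi) (wA _ _ ix Aix); rewrite ltnn.
Qed.

Lemma wtrig_scalar_mx a : wtrig_mx a%:M.
Proof. by move=> i j ij; rewrite mxE (negPf ij) mulr0n eqxx. Qed.

Lemma wtrigB A B : wtrig_mx A -> wtrig_mx B -> wtrig_mx (A - B).
Proof.
move=> wA wB i j ij; rewrite !mxE.
have [Aij|Aij _] := eqVneq (A i j) 0; last exact: wA.
by rewrite Aij sub0r oppr_eq0; exact: wB.
Qed.

Lemma wtrigX A p : wtrig_mx A -> wtrig_mx (A ^+ p) /\ forall i, (A ^+ p) i i = A i i ^+ p.
Proof.
move=> wA; elim: p => [|p [wAp AppE]].
  by split=> [|i]; [exact: wtrig_scalar_mx | rewrite expr0 !mxE eqxx].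
rewrite exprSr -mulmxE; split; first exact: wtrig_mulmx.
by move=> i; rewrite wtrig_mulmx_diag // AppE exprSr.
Qed.

Lemma wtrig_nilpotent N b : wtrig_mx N -> (forall i, N i i = 0) ->
  (forall i, (w i < b)%N) -> N ^+ b = 0.
Proof.
move=> wN N0 w_lt.
suff wNp p i j : (N ^+ p) i j != 0 -> (w j + p <= w i)%N.
  apply/matrixP => i j; rewrite mxE; apply/eqP/negP => /negP /wNp.
  by rewrite leqNgt (leq_trans (w_lt i)) ?leq_addl.
elim: p => [|p IHp] in i j *.
  by rewrite expr0 mxE addn0; case: (i =P j) => [->|_]; rewrite ?eqxx.
rewrite exprSr -mulmxE mxE; apply: contraTT; rewrite -ltnNge negbK => lt_ij.
rewrite big1 // => x _.
have [Npix|/IHp le_xi] := eqVneq ((N ^+ p) i x) 0; first by rewrite Npix mul0r.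
have [Nxj|Nxj] := eqVneq (N x j) 0; first by rewrite Nxj mulr0.
have xj : x != j by apply: contraNneq Nxj => ->; rewrite N0.
have lt_jx : (w j + p < w x + p)%N by rewrite ltn_add2r; exact: wN.
by rewrite ltnNge addnS (leq_trans lt_jx le_xi) in lt_ij.
Qed.

End WeightTriangular.

Lemma trig_wtrig_mx (R : comNzRingType) n (T : 'M[R]_n) :
  is_trig_mx T -> wtrig_mx val T.
Proof.
move/is_trig_mxP => T_trig i j ij Tij; rewrite ltnNge; apply: contra Tij => le_ij.
by apply/eqP/T_trig; rewrite ltn_neqAle le_ij andbT; apply: contra ij => /eqP/val_inj ->.
Qed.

Lemma unipotent_wtrig (R : idomainType) m (w : 'I_m -> nat) (A : 'M[R]_m) :
  wtrig_mx w A -> (unipotent A <-> forall i, A i i = 1).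
Proof.
move=> wA; have wA1 : wtrig_mx w (A - 1%:M) by apply: wtrigB => //; exact: wtrig_scalar_mx.
split=> [[N AN] i|A1].
  have [_ /(_ i)] := wtrigX N wA1; rewrite AN !mxE eqxx => /esym/eqP.
  by rewrite expf_eq0 subr_eq0 => /andP [_ /eqP].
exists (\max_i w i).+1; apply: (wtrig_nilpotent wA1) => i; first by rewrite !mxE eqxx A1 subrr.
by rewrite ltnS; apply: (@leq_bigmax _ w).
Qed.

Lemma unipotent_conj (R : comUnitRingType) m (P A : 'M[R]_m) :
  P \in unitmx -> unipotent A -> unipotent (P *m A *m invmx P).
Proof.
move=> Pu [N AN]; exists N.
have -> : P *m A *m invmx P - 1%:M = P *m (A - 1%:M) *m invmx P.
  by rewrite mulmxBr mulmxBl mulmx1 mulmxV.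
suff -> p : (P *m (A - 1%:M) *m invmx P) ^+ p = P *m (A - 1%:M) ^+ p *m invmx P.
  by rewrite AN mulmx0 mul0mx.
elim: p => [|p IHp]; first by rewrite !expr0 mulmx1 mulmxV.
rewrite exprSr IHp -mulmxE !mulmxA mulmxKV // -!mulmxA; congr (_ *m _).
by rewrite exprSr -mulmxE mulmxA.
Qed.

Lemma unipotent_conjE (R : comUnitRingType) m (P A : 'M[R]_m) :
  P \in unitmx -> unipotent (P *m A *m invmx P) <-> unipotent A.
Proof.
move=> Pu; split; last exact: unipotent_conj.
have Piu : invmx P \in unitmx by rewrite unitmx_inv.
move=> /(unipotent_conj Piu); rewrite invmxK.
by rewrite !mulmxA mulVmx // mul1mx -mulmxA mulVmx // mulmx1.
Qed.

Lemma unipotent_map (F L : fieldType) (f : {rmorphism F -> L}) m (A : 'M[F]_m) :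
  unipotent (map_mx f A) <-> unipotent A.
Proof.
have fAN N : (map_mx f A - 1%:M) ^+ N = map_mx f ((A - 1%:M) ^+ N).
  elim: N => [|N IHN]; first by rewrite !expr0 map_mx1.
  by rewrite !exprSr IHN -!mulmxE map_mxM map_mxB map_mx1.
split=> -[N AN]; exists N; last by rewrite fAN AN map_mx0.
by apply/eqP; rewrite -(map_mx_eq0 f) -fAN AN.
Qed.

Lemma perm_exists_leq_ge k (s : 'S_k) (a : 'I_k) :
  exists2 b : 'I_k, (b <= a)%N & (a <= s b)%N.
Proof.
apply/exists_inP; apply: contraT; rewrite negb_exists_in => /forall_inP s_lt.
have ak : (a.+1 <= k)%N := ltn_ord a.
have s_lt' (b : 'I_a.+1) : (s (widen_ord ak b) < a)%N.
  by rewrite ltnNge; apply: s_lt; rewrite /= -ltnS.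
pose f b : 'I_a := Ordinal (s_lt' b).
have f_inj : injective f.
  by move=> b c /(congr1 val) /= /val_inj /perm_inj /(congr1 val) /= /val_inj.
by have := leq_card f f_inj; rewrite !card_ord ltnn.
Qed.

Lemma det_trig_submx_eq0 (R : comNzRingType) n k (T : 'M[R]_n) (e e' : 'I_k -> 'I_n) a :
  is_trig_mx T -> {homo e : x y / (x <= y)%N} -> {homo e' : x y / (x <= y)%N} ->
  (e a < e' a)%N -> \det (\matrix_(i, j) T (e i) (e' j)) = 0.
Proof.
move=> /is_trig_mxP T_trig e_homo e'_homo lt_a; apply: big1 => s _.
have [b le_ba le_asb] := perm_exists_leq_ge s a.
rewrite (bigD1 b) //= mxE T_trig ?mul0r ?mulr0 //.
exact: leq_ltn_trans (e_homo _ _ le_ba) (leq_trans lt_a (e'_homo _ _ le_asb)).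
Qed.

Definition ksub_weight n k (I : 'I_#|{: ksub n k}|) : nat :=
  \sum_(x in val (enum_val I)) x.

Section WedgeTrig.
Variable R : comNzRingType.
Variables n k : nat.
Variable T : 'M[R]_n.
Hypothesis T_trig : is_trig_mx T.

Lemma wedge_trig_diag I : wedge k T I I = \prod_(x in val (enum_val I)) T x x.
Proof.
rewrite mxE det_trig ?big_kenum; first by apply: eq_bigr => a _; rewrite mxE.
apply/is_trig_mxP => a b ab; rewrite mxE.
by move/is_trig_mxP: T_trig; apply; exact: kenum_homo.
Qed.

Lemma wedge_trig : wtrig_mx (@ksub_weight n k) (wedge k T).
Proof.
move=> I J IJ; rewrite mxE => minor_neq0.
set S := enum_val I in minor_neq0 *; set S' := enum_val J in minor_neq0 *.
have le_S'S a : (kenum S' a <= kenum S a)%N.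
  rewrite leqNgt; apply: contra minor_neq0 => lt_a; apply/eqP.
  by apply: det_trig_submx_eq0 lt_a => //; exact: kenum_homo_leq.
have [a lt_a] : exists a, (kenum S' a < kenum S a)%N.
  apply/existsP; apply: contra_neqT IJ => /existsPn S_S'.
  apply/enum_val_inj/ksub_ext => a; apply/val_inj/eqP.
  by rewrite eqn_leq le_S'S andbT leqNgt S_S'.
rewrite /ksub_weight !big_kenum (bigD1 a) //= [X in (_ < X)%N](bigD1 a) //= -addSn.
by apply: leq_add => //; apply: leq_sum => b _.
Qed.

End WedgeTrig.

Lemma exists_subset_card n (A : {set 'I_n}) m : (m <= #|A|)%N ->
  exists2 U : {set 'I_n}, U \subset A & #|U| = m.
Proof.
move/card_geqP => [s [s_uniq s_size sA]].
exists [set x in s]; last by rewrite cardsE (card_uniqP s_uniq).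
by apply/subsetP => x; rewrite inE => /sA.
Qed.

Lemma ksub_prod_eq1 (R : comPzRingType) n k (d : 'I_n -> R) : (0 < k < n)%N ->
  (forall S : ksub n k, \prod_(x in val S) d x = 1) ->
  exists2 c, c ^+ k = 1 & forall i, d i = c.
Proof.
case/andP=> k_gt0 lt_kn prod1.
have d_const i j : d i = d j.
  have [<-//|ij] := eqVneq i j.
  have card_compl : (k.-1 <= #|~: [set i; j]|)%N.
    by have := cardsC [set i; j]; rewrite cards2 ij card_ord; lia.
  have [U sU cardU] := exists_subset_card card_compl.
  have iU : i \notin U by apply/negP => /(subsetP sU); rewrite !inE eqxx.
  have jU : j \notin U by apply/negP => /(subsetP sU); rewrite !inE eqxx orbT.
  have cardiU : #|i |: U| == k by rewrite cardsU1 iU cardU; apply/eqP; lia.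
  have cardjU : #|j |: U| == k by rewrite cardsU1 jU cardU; apply/eqP; lia.
  have := prod1 (ksub_of cardiU); have := prod1 (ksub_of cardjU).
  rewrite /= !big_setU1 //= => dj di.
  by rewrite -[d i]mulr1 -dj mulrCA di mulr1.
pose i0 : 'I_n := Ordinal (ltn_trans k_gt0 lt_kn).
exists (d i0) => [|i]; last exact: d_const.
have [S0 _ cardS0] : exists2 S0 : {set 'I_n}, S0 \subset setT & #|S0| = k.
  by apply: exists_subset_card; rewrite cardsT card_ord ltnW.
have := prod1 (ksub_of (introT eqP cardS0)); rewrite /=.
by under eq_bigr do rewrite (d_const _ i0); rewrite prodr_const cardS0.
Qed.

Lemma invmx_mulmx (R : comUnitRingType) n (A B : 'M[R]_n) :
  A \in unitmx -> B \in unitmx -> invmx (A *m B) = invmx B *m invmx A.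
Proof.
move=> Au Bu; have ABu : A *m B \in unitmx by rewrite unitmx_mul Au Bu.
rewrite -[RHS]mulmx1 -(mulmxV ABu) !mulmxA -[invmx B *m invmx A *m A]mulmxA.
by rewrite mulVmx // mulmx1 mulVmx // mul1mx.
Qed.

Section Trigonalization.
Variable F : fieldType.

Lemma char_poly_conj n (P A : 'M[F]_n) : P \in unitmx ->
  char_poly (P *m A *m invmx P) = char_poly A.
Proof.
move=> Pu; rewrite /char_poly.
pose mP := map_mx (@polyC F) P; pose mPi := map_mx (@polyC F) (invmx P).
have mPV : mP *m mPi = 1%:M by rewrite -map_mxM mulmxV // map_mx1.
have -> : char_poly_mx (P *m A *m invmx P) = mP *m char_poly_mx A *m mPi.
  rewrite /char_poly_mx mulmxBr mulmxBl !map_mxM mul_mx_scalar -scalemxAl mPV.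
  by rewrite scalemx1.
by rewrite !det_mulmx mulrAC -det_mulmx mPV det1 mul1r.
Qed.

Lemma char_poly_lblock n a (c : 'M[F]_(n, 1)) (D : 'M[F]_n) :
  char_poly (block_mx (a%:M : 'M_1) 0 c D) = ('X - a%:P) * char_poly D.
Proof.
rewrite /char_poly /char_poly_mx map_block_mx (scalar_mx_block 1 n) map_mx0.
rewrite opp_block_mx add_block_mx oppr0 addr0 det_lblock det_mx11.
by rewrite !mxE /= mulr1n.
Qed.

Lemma eigenvalue_block_conj n (A : 'M[F]_(1 + n)) a : eigenvalue A a ->
  exists2 P, P \in unitmx &
    exists c D, P *m A *m invmx P = block_mx (a%:M : 'M_1) 0 c D.
Proof.
move=> /eigenvalueP [v vA v_neq0].
have rank_compl : \rank (v^C)%MS = n by rewrite mxrank_compl rank_rV v_neq0 subn1.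
pose P : 'M[F]_(1 + n) := col_mx v (castmx (rank_compl, erefl) (row_base (v^C)%MS)).
have Pu : P \in unitmx.
  have P_full : (P :=: v + v^C)%MS.
    apply: eqmx_trans (eqmx_sym (addsmxE _ _)) _.
    by apply: adds_eqmx => //; exact: eqmx_trans (eqmx_cast _ _) (eq_row_base _).
  by rewrite -row_full_unit /row_full P_full; exact: addsmx_compl_full.
exists P => //; pose A1 := P *m A *m invmx P.
have vPi : v *m invmx P = row_mx (1%:M : 'M_1) 0.
  have := mulmxV Pu; rewrite mul_col_mx (scalar_mx_block 1 n) => /(congr1 usubmx).
  by rewrite col_mxKu block_mxEv col_mxKu.
have A1u : usubmx A1 = row_mx (a%:M : 'M_1) 0.
  by rewrite /A1 !mul_col_mx col_mxKu vA -scalemxAl vPi scale_row_mx scalemx1 scaler0.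
exists (dlsubmx A1), (drsubmx A1); rewrite -[LHS]submxK.
by rewrite -[ulsubmx A1]/(lsubmx (usubmx A1)) -[ursubmx A1]/(rsubmx (usubmx A1)) A1u
  row_mxKl row_mxKr.
Qed.

Lemma trig_conj_split n (A : 'M[F]_n) (rs : seq F) :
  char_poly A = \prod_(x <- rs) ('X - x%:P) ->
  exists2 P, P \in unitmx & is_trig_mx (P *m A *m invmx P).
Proof.
elim: n A rs => [|n IHn] A rs charA.
  by exists 1%:M; [exact: unitmx1 | apply/is_trig_mxP => -[]].
case: rs charA => [|a rs] charA.
  by have := size_char_poly A; rewrite charA big_nil size_poly1.
have Aa : eigenvalue A a.
  by rewrite eigenvalue_root_char charA root_prod_XsubC mem_head.
have [P0 P0u [c [D A1E]]] := eigenvalue_block_conj Aa.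
have charD : char_poly D = \prod_(x <- rs) ('X - x%:P).
  have := char_poly_conj A P0u; rewrite A1E char_poly_lblock charA big_cons.
  exact/mulfI/negbT/polyXsubC_eq0.
have [P' P'u P'_trig] := IHn D rs charD.
pose Q : 'M[F]_(1 + n) := block_mx 1%:M 0 0 P'.
have Qu : Q \in unitmx by rewrite block_diag_mx_unit unitmx1 P'u.
exists (Q *m P0); first by rewrite unitmx_mul Qu P0u.
have -> : Q *m P0 *m A *m invmx (Q *m P0) = Q *m (P0 *m A *m invmx P0) *m invmx Q.
  by rewrite invmx_mulmx // !mulmxA.
rewrite A1E.
rewrite invmx_block_diag // invmx1 !mulmx_block !(mulmx0, mul0mx, mulmx1, mul1mx).
rewrite !(addr0, add0r) mul0mx.
by rewrite (@is_trig_block_mx _ 1 n 1 n) // eqxx scalar_mx_is_trig P'_trig.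
Qed.

End Trigonalization.

Lemma exists_monic_irreducible_factor (F : fieldType) (p : {poly F}) : (1 < size p)%N ->
  exists2 q : {poly F}, monic_irreducible_poly q & q %| p.
Proof.
elim: {p}(size p) {-2}p (leqnn (size p)) => [|m IHm] p size_p size_p_gt1.
  by move: (leq_trans size_p_gt1 size_p).
have p_neq0 : p != 0 by rewrite -size_poly_gt0 (ltn_trans _ size_p_gt1).
have [p_irr|p_red] := pselect (irreducible_poly p).
  have lc_neq0 : (lead_coef p)^-1 != 0 by rewrite invr_eq0 lead_coef_eq0.
  exists ((lead_coef p)^-1 *: p); last by rewrite dvdpZl.
  split; last by apply/monicP; rewrite lead_coefZ mulVf // lead_coef_eq0.
  split=> [|q size_q]; first by rewrite size_scale.
  rewrite dvdpZr // => qp; apply: eqp_trans (p_irr.2 q size_q qp) _.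
  by rewrite eqp_sym eqp_scale.
have [q [size_q qp q_neqp]] : exists q : {poly F}, [/\ size q != 1%N, q %| p & ~~ (q %= p)].
  apply: contra_notP p_red => no_q; split=> // q size_q qp.
  by apply/negPn/negP => q_neqp; apply: no_q; exists q.
have q_neq0 : q != 0 by apply: contraNneq p_neq0 => q0; move: qp; rewrite q0 dvd0p.
have size_q_gt1 : (1 < size q)%N by rewrite ltn_neqAle eq_sym size_q size_poly_gt0.
have size_qp : (size q < size p)%N.
  by rewrite ltn_neqAle dvdp_size_eqp // (negPf q_neqp) dvdp_leq.
have [r r_irr rq] := IHm q (leq_trans size_qp size_p) size_q_gt1.
by exists r => //; exact: dvdp_trans rq qp.
Qed.

Lemma exists_splitting_ext (F : fieldType) (p : {poly F}) : p \is monic ->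
  exists (L : fieldType) (f : {rmorphism F -> L}) (rs : seq L),
    map_poly f p = \prod_(x <- rs) ('X - x%:P).
Proof.
move: (leqnn (size p)) => /[swap]; move: {2}(size p) => m.
elim: m F p => [|m IHm] F p p_monic size_p.
  by move: (monic_neq0 p_monic); rewrite -size_poly_gt0 ltnNge size_p.
have [size_p_le1|size_p_gt1] := leqP (size p) 1.
  have -> : p = 1.
    by move/monicP: p_monic; rewrite (size1_polyC size_p_le1) lead_coefC => ->.
  by exists F, idfun, [::]; rewrite rmorph1 big_nil.
have [q q_irr qp] := exists_monic_irreducible_factor size_p_gt1.
pose K : fieldType := {poly %/ q with q_irr}.
pose c : {rmorphism F -> K} := qpolyC q.
pose x : K := qpolyX q.
have qx : root (map_poly c q) x.
  have := in_qpoly_comp_horner q q 'X; rewrite comp_polyXr.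
  have -> : in_qpoly q q = 0.
    by apply: val_inj => /=; rewrite mk_monicE // Pdiv.RingMonic.rmodpp // q_irr.2.
  by move=> qx0; apply/eqP; rewrite /x /qpolyX -qx0.
have px : root (map_poly c p) x by apply: root_dvdp qx; rewrite dvdp_map.
have [p' p'E] := factor_theorem _ _ px.
have p'_monic : p' \is monic.
  by rewrite -(monicMr _ (monicXsubC x)) -p'E map_monic.
have size_p' : (size p' <= m)%N.
  have := size_map_poly c p; rewrite p'E size_Mmonic ?monic_neq0 ?monicXsubC //.
  by rewrite size_XsubC addn2 /= => size_pE; rewrite -ltnS size_pE.
have [L [f' [rs' p'_split]]] := IHm K p' p'_monic size_p'.
exists L, (f' \o c)%FUN, (f' x :: rs').
by rewrite map_poly_comp p'E rmorphM /= map_polyXsubC p'_split big_cons mulrC.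
Qed.

Lemma trig_conj_ext (F : fieldType) n (g : 'M[F]_n) :
  exists (L : fieldType) (f : {rmorphism F -> L}) (P : 'M[L]_n),
    P \in unitmx /\ is_trig_mx (P *m map_mx f g *m invmx P).
Proof.
have [L [f [rs g_split]]] := exists_splitting_ext (char_poly_monic g).
rewrite map_char_poly in g_split.
by have [P Pu P_trig] := trig_conj_split g_split; exists L, f, P.
Qed.

Section TrigonalizedWedge.
Variables (F L : fieldType) (f : {rmorphism F -> L}) (n k : nat).
Variables (g : 'M[F]_n) (P : 'M[L]_n).
Hypothesis Pu : P \in unitmx.
Local Notation T := (P *m map_mx f g *m invmx P).
Hypothesis T_trig : is_trig_mx T.

Lemma unipotent_scale_trigE c : unipotent (c *: g) <-> forall i, f c * T i i = 1.
Proof.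
rewrite -(unipotent_map f) -(unipotent_conjE _ Pu) map_mxZ -scalemxAr -scalemxAl.
rewrite (unipotent_wtrig (trig_wtrig_mx _)); last first.
  by apply/is_trig_mxP => i j ij; rewrite mxE (is_trig_mxP T_trig i j ij) mulr0.
by split=> T1 i; move: (T1 i); rewrite !mxE.
Qed.

Lemma unipotent_wedge_trigE :
  unipotent (wedge k g) <-> forall S : ksub n k, \prod_(x in val S) T x x = 1.
Proof.
have [WPu WPV] := wedge_invmx k Pu.
rewrite -(unipotent_map f) map_wedge -(unipotent_conjE _ WPu) -WPV -!wedgeM.
rewrite (unipotent_wtrig (@wedge_trig _ _ k _ T_trig)).
split=> [T1 S|T1 I]; last by rewrite (wedge_trig_diag T_trig) T1.
by have := T1 (enum_rank S); rewrite (wedge_trig_diag T_trig) enum_rankK.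
Qed.

Lemma trig_trace_const lam : (forall i, T i i = lam) -> lam *+ n = f (\tr g).
Proof.
move=> T_lam; rewrite -trace_map_mx -[map_mx f g]mul1mx -(mulVmx Pu) -mulmxA.
rewrite mxtrace_mulC /mxtrace; under eq_bigr do rewrite T_lam.
by rewrite sumr_const card_ord.
Qed.

End TrigonalizedWedge.

Theorem unipotent_wedgeP (F : fieldType) n k (g : 'M[F]_n) :
  (0 < k < n)%N -> n%:R != 0 :> F ->
  unipotent (wedge k g) <-> exists2 c : F, c ^+ k = 1 & unipotent (c *: g).
Proof.
move=> /[dup] kn /andP [k_gt0 _] n_neq0.
have [L [f [P [Pu T_trig]]]] := trig_conj_ext g.
rewrite (unipotent_wedge_trigE k Pu T_trig); split.
  move=> /(ksub_prod_eq1 kn) [lam lam_k T_lam]; pose t := \tr g / n%:R.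
  have ft : f t = lam.
    have n_neq0' : n%:R != 0 :> L by rewrite -(rmorph_nat f) fmorph_eq0.
    by rewrite fmorph_div rmorph_nat -(trig_trace_const Pu T_lam) -mulr_natr mulfK.
  have t_k : t ^+ k = 1 by apply: (fmorph_inj f); rewrite rmorphXn ft lam_k rmorph1.
  exists (t ^+ k.-1); first by rewrite -exprM mulnC exprM t_k expr1n.
  apply/(unipotent_scale_trigE Pu T_trig) => i.
  by rewrite rmorphXn ft T_lam -exprSr prednK.
move=> [c c_k /(unipotent_scale_trigE Pu T_trig) T_c] S.
have : \prod_(x in val S) (f c * (P *m map_mx f g *m invmx P) x x) = 1 by rewrite big1.
by rewrite big_split /= prodr_const (eqP (valP S)) -rmorphXn c_k rmorph1 mul1r.
Qed.

Lemma frac_decomp (R : idomainType) (x : {fraction R}) :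
  exists a b : R, b != 0 /\ x * FracField.tofrac b = FracField.tofrac a.
Proof.
elim/quotW: x => r; exists r.1, r.2; split; first exact: denom_ratioP.
unlock FracField.tofrac.
transitivity ((\pi_({fraction R}) (FracField.mulf r (Ratio r.2 1)))%qT).
  exact: (esym (FracField.pi_mul _ _)).
apply/eqmodP; rewrite /= FracField.equivfE /FracField.mulf.
rewrite !numden_Ratio ?oner_neq0 ?mulf_neq0 ?denom_ratioP ?oner_neq0 //.
by rewrite !mulr1 mulrC.
Qed.

Section LAdic.
Variable l : nat.
Local Notation q := (lbase l).
Local Notation Q := (Qm l).
Local Notation Z := (zl l).
Local Notation p := (q%:R : Z).

Lemma Qm_neq0 m : Q m != 0.
Proof. by rewrite lt0r_neq0 // ltz_nat expn_gt0 prime_gt0 // lbase_prime. Qed.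

Lemma QmS m : Q m.+1 = Q m * q%:Z.
Proof. by rewrite /Qm expnS mulnC PoszM. Qed.

Lemma Qm1 : Q 1 = q%:Z.
Proof. by rewrite /Qm expn1. Qed.

Lemma zseqD (x y : Z) m : zseq (x + y) m = ((zseq x m + zseq y m) %% Q m)%Z.
Proof. by []. Qed.

Lemma zseqM (x y : Z) m : zseq (x * y) m = ((zseq x m * zseq y m) %% Q m)%Z.
Proof. by []. Qed.

Lemma zseq1 m : zseq (1 : Z) m = (1 %% Q m)%Z.
Proof. by []. Qed.

Lemma zseq_natr (a : nat) m : zseq (a%:R : Z) m = (a%:Z %% Q m)%Z.
Proof.
elim: a => [|a IHa]; first by rewrite zseq0 mod0z.
by rewrite mulrS zseqD IHa zseq1 modzDm -PoszD add1n.
Qed.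

Lemma zseq_neq0 (x : Z) : x != 0 -> exists m, zseq x m != 0.
Proof.
move=> x_neq0; apply: contrapT => zseq_eq0; case/eqP: x_neq0; apply: zl_eq => m.
by rewrite zseq0; apply/eqP/negPn/negP => xm; apply: zseq_eq0; exists m.
Qed.

Lemma ql_natr_neq0 (a : nat) : (0 < a)%N -> (a%:R : Ql l) != 0.
Proof.
move=> a_gt0; rewrite -(rmorph_nat (@FracField.tofrac Z)) tofrac_eq0.
apply/eqP => /(congr1 (fun z => zseq z a)); rewrite zseq_natr zseq0 modz_small.
  by move=> [a0]; rewrite a0 in a_gt0.
by rewrite lez_nat ltz_nat leq0n /Qm /= ltn_expl // q_gt1.
Qed.

Lemma zseq_pX_mul (i : nat) (y : Z) : zseq (p ^+ i * y) i = 0.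
Proof. by rewrite zseqM -natrX zseq_natr /Qm modzz mul0r mod0z. Qed.

Lemma p_neq0 : p != 0.
Proof.
apply/eqP => /(congr1 (fun z => zseq z 2)); rewrite zseq_natr zseq0 modz_small.
  by move/eqP; rewrite -Qm1 (negPf (Qm_neq0 1)).
by rewrite /Qm lez_nat ltz_nat leq0n /= -{1}(expn1 q) ltn_exp2l // q_gt1.
Qed.

Lemma p_nonunit : p \isn't a GRing.unit.
Proof.
apply/negP => /unitrPr [y /(congr1 (fun z => zseq z 1))].
rewrite zseqM zseq1 zseq_natr Qm1 modzz mul0r mod0z modz_small //.
by rewrite ler01 /= ltz_nat q_gt1.
Qed.

Lemma zseq1_eq0_dvdp (x : Z) : zseq x 1 = 0 -> exists y, x = p * y.
Proof.
move=> x1.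
have q_dvd m : (q%:Z %| zseq x m.+1)%Z.
  by apply/dvdz_mod0P; rewrite -Qm1 -(zl_stab x (_ : 1 <= m.+1)%N).
pose y m := (zseq x m.+1 %/ q%:Z)%Z.
have yq m : y m * q%:Z = zseq x m.+1 by rewrite divzK.
have y_compat : compat l y.
  have q_neq0 : q%:Z != 0 by rewrite -Qm1 Qm_neq0.
  move=> m; apply/eqP; rewrite eqz_mod_dvd -(@dvdz_mul2r q%:Z _ _ q_neq0).
  rewrite mulrBl !yq -QmS -eqz_mod_dvd; apply/eqP.
  by rewrite [in LHS]zseqP modz_mod.
exists (mkz y_compat); apply: zl_eq => m.
by rewrite zseqM zseq_natr /= modzMml modzMmr mulrC yq -zseqP.
Qed.

Lemma zseq1_neq0_unit (x : Z) : zseq x 1 != 0 -> x \is a GRing.unit.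
Proof.
move=> x1.
have x_coprime m : coprimez (zseq x m) (Q m).
  case: m => [|m]; first by rewrite /Qm expn0 coprimezE /= coprimen1.
  rewrite coprimezE /Qm /= coprime_pexpr // coprime_sym prime_coprime ?lbase_prime //.
  apply: contra x1 => q_dvd; rewrite (zl_stab x (_ : 1 <= m.+1)%N) // Qm1.
  by apply/eqP/dvdz_mod0P; rewrite dvdzE.
pose y m := (egcdz (zseq x m) (Q m)).1.
have yx m : (Q m %| y m * zseq x m - 1)%Z.
  have gcd1 : gcdz (zseq x m) (Q m) = 1 by apply/eqP; exact: x_coprime.
  rewrite /y; case: egcdzP => u v /= uv _; rewrite -gcd1 -uv opprD addrA subrr add0r.
  by rewrite rpredN dvdz_mull.
have y_compat : compat l y.
  move=> m; apply/eqP; rewrite eqz_mod_dvd.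
  have yx' : (Q m %| y m.+1 * zseq x m.+1 - 1)%Z.
    by apply: dvdz_trans (yx m.+1); rewrite QmS dvdz_mulr.
  have xx' : (Q m %| zseq x m.+1 - zseq x m)%Z.
    by rewrite -eqz_mod_dvd; apply/eqP; rewrite [in RHS]zseqP modz_mod.
  have -> : y m - y m.+1 = y m.+1 * (y m * zseq x m - 1)
      - y m * (y m.+1 * zseq x m.+1 - 1) + y m * y m.+1 * (zseq x m.+1 - zseq x m).
    by ring.
  by rewrite rpredD ?rpredB // dvdz_mull.
apply/unitrPr; exists (mkz y_compat); apply: zl_eq => m.
by rewrite zseqM zseq1 /= modzMmr mulrC; apply/eqP; rewrite eqz_mod_dvd yx.
Qed.

Lemma zl_unit_decomp (x : Z) : x != 0 ->
  exists i u, x = p ^+ i * u /\ u \is a GRing.unit.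
Proof.
move=> x_neq0; have [N xN] := zseq_neq0 x_neq0.
(* Peel off factors p one at a time; there are fewer than N since zseq x N != 0. *)
suff : (exists y, x = p ^+ N * y) \/ (exists i u, x = p ^+ i * u /\ u \is a GRing.unit).
  by case=> // -[y xy]; case/eqP: xN; rewrite xy zseq_pX_mul.
elim: N {xN} => [|N [[y xy]|decomp]]; [by left; exists x; rewrite expr0 mul1r| |by right].
have [y1|y1] := eqVneq (zseq y 1) 0.
  by have [y' yE] := zseq1_eq0_dvdp y1; left; exists y'; rewrite xy yE exprSr mulrA.
by right; exists N, y; split=> //; exact: zseq1_neq0_unit.
Qed.

Lemma zl_dvd_of_eq_expr k (a b : Z) : (0 < k)%N -> b != 0 -> a ^+ k = b ^+ k ->
  exists z, a = z * b.
Proof.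
move=> k_gt0 b_neq0 ab_k.
have a_neq0 : a != 0.
  by apply: contraNneq (expf_neq0 k b_neq0) => a0; rewrite -ab_k a0 expr0n gtn_eqF.
have [i [u [aE u_unit]]] := zl_unit_decomp a_neq0.
have [j [w [bE w_unit]]] := zl_unit_decomp b_neq0.
rewrite aE bE in ab_k *; have [le_ji|lt_ij] := leqP j i.
  exists (p ^+ (i - j) * u * w^-1); rewrite -mulrA [w^-1 * _]mulrCA mulVr // mulr1.
  by rewrite mulrAC -exprD subnK.
move: ab_k; rewrite !exprMn -!exprM.
have -> : (j * k = i * k + (j - i) * k)%N by rewrite -mulnDl subnKC // ltnW.
rewrite exprD -mulrA => /(mulfI (expf_neq0 _ p_neq0)) uw_k.
have : u ^+ k \is a GRing.unit by exact: unitrX.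
rewrite uw_k -(prednK (_ : 0 < (j - i) * k)%N) ?muln_gt0 ?subn_gt0 ?lt_ij //.
by rewrite exprS -mulrA unitrM (negPf p_nonunit).
Qed.

Lemma ql_root_of_unity (t : Ql l) k : (0 < k)%N -> t ^+ k = 1 ->
  exists z : Z, zl_to_ql z = t.
Proof.
move=> k_gt0 t_k; have [a [b [b_neq0 tb]]] := frac_decomp t.
have ab_k : a ^+ k = b ^+ k.
  by apply/eqP; rewrite -tofrac_eq !tofracXn -tb exprMn t_k mul1r.
have [z aE] := zl_dvd_of_eq_expr k_gt0 b_neq0 ab_k.
exists z; apply: (mulIf (_ : FracField.tofrac b != 0)); first by rewrite tofrac_eq0.
by rewrite tb aE tofracM.
Qed.

End LAdic.

Theorem lemma3p7 (l : nat) (n k : nat) (g : 'M[Ql l]_n) :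
  prime l -> (0 < k)%N -> (k < n)%N -> g \in unitmx ->
  (unipotent (wedge k g) <->
   exists gamma : zl l, gamma ^+ k = 1 /\ unipotent (zl_to_ql gamma *: g)).
Proof.
move=> _ k_gt0 lt_kn _.
rewrite unipotent_wedgeP ?k_gt0 // ?ql_natr_neq0 ?(ltn_trans k_gt0) //.
split=> [[c c_k g_c] | [gamma [gamma_k g_gamma]]].
  have [z zc] := ql_root_of_unity k_gt0 c_k; exists z; split; last by rewrite zc.
  by apply/eqP; rewrite -tofrac_eq tofracXn tofrac1 -/(zl_to_ql z) zc c_k.
by exists (zl_to_ql gamma) => //; rewrite -tofracXn gamma_k tofrac1.
Qed.
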